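(* Under the standing assumptions, suppose $\varphi$ is lower semicontinuous on $X$. Let $\rho_k\to\infty$ and $\sigma_k\to 0$ with $\rho_k,\sigma_k>0$. Then for every sequence $\{x_k\}\subset X$ with $x_k\to\bar x$, $$\liminf_{k\to\infty}\varphi_{\rho_k,\sigma_k}(x_k)\ge\varphi(\bar x).$$
   Context: Standing assumptions: $X\subset\mathbb{R}^n$ and $Y\subset\mathbb{R}^m$ are nonempty, convex and compact. $f:X\times Y\to\mathbb{R}$ is continuously differentiable with Lipschitz continuous gradient on $X\times Y$, $f(x,\cdot)$ concave on $Y$. $c=(c_1,\dots,c_p)$ has continuously differentiable components with Lipschitz gradients, each $c_i(x,\cdot)$ convex on $Y$. For every $x\in X$, $\Theta(x):=\{y\in Y: c(x,y)\le 0\}\neq\emptyset$. Notation: $[z]_+=\max\{z,0\}$ componentwise; $\varphi(x):=\max\{f(x,y): y\in\Theta(x)\}$; $\psi_{\rho,\sigma}(x,y):=f(x,y)-\frac{\rho}{2}\|[c(x,y)]_+\|^2-\frac{\sigma}{2}\|y\|^2$; $\varphi_{\rho,\sigma}(x):=\max_{y\in Y}\psi_{\rho,\sigma}(x,y)$. *)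

From HB Require Import structures.
From mathcomp Require Import all_boot all_order all_algebra.
From mathcomp Require Import all_classical all_reals all_analysis.
Set Implicit Arguments. Unset Strict Implicit. Unset Printing Implicit Defensive.
Import Order.TTheory GRing.Theory Num.Theory.
Import numFieldNormedType.Exports.
Local Open Scope classical_set_scope.
Local Open Scope ring_scope.

Section Defs.
Variable R : realType.

Definition sqnorm (k : nat) (v : 'rV[R]_k) : R := \sum_(i < k) (v ord0 i) ^+ 2.

Definition sqnorm_pos (k : nat) (v : 'rV[R]_k) : R :=
  \sum_(i < k) (Num.max (v ord0 i) 0) ^+ 2.

Definition concave_on (k : nat) (S : set 'rV[R]_k) (g : 'rV[R]_k -> R) : Prop :=
  forall u v (t : R), S u -> S v -> 0 <= t <= 1 ->
    t * g u + (1 - t) * g v <= g (t *: u + (1 - t) *: v).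

Definition convex_on (k : nat) (S : set 'rV[R]_k) (g : 'rV[R]_k -> R) : Prop :=
  forall u v (t : R), S u -> S v -> 0 <= t <= 1 ->
    g (t *: u + (1 - t) *: v) <= t * g u + (1 - t) * g v.

Definition C11_on (V : normedModType R) (S : set V) (F : V -> R) : Prop :=
  (forall p, S p -> differentiable F p) /\
  exists L : R, forall p q, S p -> S q -> forall v : V,
    `|'d F p v - 'd F q v| <= L * `|p - q| * `|v|.

Variables (n m p : nat).
Variables (X : set 'rV[R]_n) (Y : set 'rV[R]_m).
Variable f : 'rV[R]_n -> 'rV[R]_m -> R.
Variable c : 'rV[R]_n -> 'rV[R]_m -> 'rV[R]_p.

Definition Theta (x : 'rV[R]_n) : set 'rV[R]_m :=
  [set y | Y y /\ forall i : 'I_p, c x y ord0 i <= 0].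

Definition phi (x : 'rV[R]_n) : R := sup [set f x y | y in Theta x].

Definition psi (rho sigma : R) (x : 'rV[R]_n) (y : 'rV[R]_m) : R :=
  f x y - rho / 2 * sqnorm_pos (c x y) - sigma / 2 * sqnorm y.

Definition phi_rs (rho sigma : R) (x : 'rV[R]_n) : R :=
  sup [set psi rho sigma x y | y in Y].

Definition lsc_on (g : 'rV[R]_n -> R) : Prop :=
  forall x, X x -> forall e : R, 0 < e -> exists2 d : R, 0 < d &
    forall z, X z -> `|z - x| < d -> g x - e < g z.

End Defs.

From HB Require Import structures.
From mathcomp Require Import all_boot all_order all_algebra.
From mathcomp Require Import all_classical all_reals all_analysis.
From mathcomp Require Import lra.
Set Implicit Arguments. Unset Strict Implicit. Unset Printing Implicit Defensive.
Import Order.TTheory GRing.Theory Num.Theory.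
Import numFieldNormedType.Exports.
Local Open Scope classical_set_scope.
Local Open Scope ring_scope.

(* A feasible [y] in [Theta x] pays no constraint penalty, so
   [phi_{rho,sigma} x >= f x y - sigma/2 * C], where [C] bounds [|y|^2] on the
   compact [Y]; taking the sup over [Theta x] gives
   [phi_{rho,sigma} x >= phi x - sigma/2 * C] whatever [rho >= 0] is.
   Lower semicontinuity of [phi] at [xbar] and [sigma_k -> 0] then give
   [phi_{rho_k,sigma_k}(x_k) >= phi xbar - e] for all large [k]. *)

Section SquaredNorms.
Variable R : realType.

Lemma entry_le_norm k (v : 'rV[R]_k) i : `|v ord0 i| <= `|v|.
Proof.
have /mapP[j _ ->] : `|v ord0 i| \in [seq `|v x.1 x.2| | x : 'I_1 * 'I_k].
  by apply/mapP; exists (ord0, i) => //=; rewrite mem_enum.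
by rewrite [leRHS]/Num.norm /= mx_normrE; apply/bigmax_geP; right; exists j.
Qed.

Lemma sqnorm_ge0 k (v : 'rV[R]_k) : 0 <= sqnorm v.
Proof. by apply: sumr_ge0 => i _; rewrite sqr_ge0. Qed.

Lemma sqnorm_pos_ge0 k (v : 'rV[R]_k) : 0 <= sqnorm_pos v.
Proof. by apply: sumr_ge0 => i _; rewrite sqr_ge0. Qed.

Lemma sqnorm_pos_eq0 k (v : 'rV[R]_k) :
  (forall i, v ord0 i <= 0) -> sqnorm_pos v = 0.
Proof. by move=> v_le0; apply: big1 => i _; rewrite max_r ?v_le0 // expr0n. Qed.

Lemma sqnorm_le k (v : 'rV[R]_k) B : `|v| <= B -> sqnorm v <= k%:R * B ^+ 2.
Proof.
move=> vB; apply: (@le_trans _ _ (\sum_(i < k) B ^+ 2)).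
  apply: ler_sum => i _; rewrite -real_normK ?num_real // !expr2.
  by have viB := le_trans (entry_le_norm v i) vB; rewrite ler_pM.
by rewrite sumr_const card_ord mulr_natl.
Qed.

Lemma compact_sqnorm_bounded k (Y : set 'rV[R]_k) :
  compact Y -> exists C, 0 <= C /\ forall y, Y y -> sqnorm y <= C.
Proof.
move=> /compact_bounded[B [_ YB]].
exists (k%:R * (`|B| + 1) ^+ 2); split; first by rewrite mulr_ge0 ?sqr_ge0.
move=> y Yy; apply/sqnorm_le/YB => //.
by rewrite (le_lt_trans (ler_norm _)) ?ltrDl.
Qed.

End SquaredNorms.

Section Analysis.
Variable R : realType.

Lemma C11_on_continuous (V : normedModType R) (S : set V) (F : V -> R) :
  C11_on S F -> {within S, continuous F}.
Proof.
move=> [F_diff _]; apply: continuous_in_subspaceT => z /set_mem Sz.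
exact/differentiable_continuous/F_diff.
Qed.

Lemma compact_continuous_ubound (V : normedModType R) (S : set V) (F : V -> R) :
  compact S -> {within S, continuous F} -> exists M, forall z, S z -> F z <= M.
Proof.
move=> cS cF; have /compact_bounded[M [_ FM]] := continuous_compact cF cS.
exists (M + 1) => z Sz; apply: le_trans (ler_norm _) _.
by apply: FM; [rewrite ltrDl | exists z].
Qed.

Lemma lsc_on_cvg n (X : set 'rV[R]_n) (g : 'rV[R]_n -> R) (x : nat -> 'rV[R]_n) xbar :
  lsc_on X g -> (forall k, X (x k)) -> x @ \oo --> xbar -> X xbar ->
  forall e, 0 < e -> \forall k \near \oo, g xbar - e < g (x k).
Proof.
move=> g_lsc Xx x_cvg Xxbar e e0; have [d d0 gd] := g_lsc _ Xxbar _ e0.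
have /cvgrPdist_lt /(_ d d0) := x_cvg.
by apply: filterS => k xk; apply: gd => //; rewrite distrC.
Qed.

Lemma le_limn_einf (u : R ^nat) (a : R) :
  (forall e, 0 < e -> \forall k \near \oo, a - e <= u k) ->
  (a%:E <= limn_einf (fun k => (u k)%:E))%E.
Proof.
move=> u_ge; apply/lee_subgt0Pr => e e0.
rewrite limn_einf_lim; apply: lime_ge; first exact: is_cvg_einfs.
have [N _ uN] := u_ge e e0; exists N => // j /= Nj.
apply: le_ereal_inf_tmp => _ [k /= jk <-].
by rewrite -EFinB lee_fin uN //= (leq_trans Nj).
Qed.

End Analysis.

Section PenaltyBound.
Variables (R : realType) (n m p : nat).
Variables (Y : set 'rV[R]_m) (f : 'rV[R]_n -> 'rV[R]_m -> R).
Variable c : 'rV[R]_n -> 'rV[R]_m -> 'rV[R]_p.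
Variables (rho sigma : R) (x : 'rV[R]_n).
Hypotheses (rho_ge0 : 0 <= rho) (sigma_ge0 : 0 <= sigma).

Lemma psi_le y : psi f c rho sigma x y <= f x y.
Proof.
rewrite /psi -addrA gerDl -opprD oppr_le0 addr_ge0 // mulr_ge0 ?divr_ge0 //.
  exact: sqnorm_pos_ge0.
exact: sqnorm_ge0.
Qed.

Lemma psi_Theta y :
  Theta Y c x y -> psi f c rho sigma x y = f x y - sigma / 2 * sqnorm y.
Proof. by move=> [_ c_le0]; rewrite /psi sqnorm_pos_eq0 // mulr0 subr0. Qed.

Lemma phi_le_phi_rs M C :
  (forall y, Y y -> f x y <= M) -> (forall y, Y y -> sqnorm y <= C) ->
  Theta Y c x !=set0 ->
  phi Y f c x - sigma / 2 * C <= phi_rs Y f c rho sigma x.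
Proof.
move=> fM YC [y0 Theta_y0]; rewrite lerBlDr.
apply: ge_sup; first by exists (f x y0), y0.
move=> _ [y Theta_y <-]; rewrite -lerBlDr.
have psi_sup : has_sup [set psi f c rho sigma x y | y in Y].
  split; first by exists (psi f c rho sigma x y), y; case: Theta_y.
  by exists M => _ [z Yz <-]; apply: le_trans (psi_le z) (fM z Yz).
apply: le_trans (sup_upper_bound psi_sup _); last by exists y; case: Theta_y.
rewrite psi_Theta // lerB // ler_wpM2l ?divr_ge0 //.
by case: Theta_y => Yy _; apply: YC.
Qed.

End PenaltyBound.

Theorem lemma2p3 (R : realType) (n m p : nat)
  (X : set 'rV[R]_n) (Y : set 'rV[R]_m)
  (f : 'rV[R]_n -> 'rV[R]_m -> R) (c : 'rV[R]_n -> 'rV[R]_m -> 'rV[R]_p) :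
  X !=set0 -> convex_set X -> compact X ->
  Y !=set0 -> convex_set Y -> compact Y ->
  C11_on (X `*` Y) (fun z : 'rV[R]_n * 'rV[R]_m => f z.1 z.2) ->
  (forall x, X x -> concave_on Y (f x)) ->
  (forall i : 'I_p,
     C11_on (X `*` Y) (fun z : 'rV[R]_n * 'rV[R]_m => c z.1 z.2 ord0 i)) ->
  (forall i : 'I_p, forall x, X x -> convex_on Y (fun y => c x y ord0 i)) ->
  (forall x, X x -> Theta Y c x !=set0) ->
  lsc_on X (phi Y f c) ->
  forall (rho sigma : nat -> R),
    (forall k, 0 < rho k) -> (forall k, 0 < sigma k) ->
    rho @ \oo --> +oo -> sigma @ \oo --> 0 ->
  forall (x : nat -> 'rV[R]_n) (xbar : 'rV[R]_n),
    (forall k, X (x k)) -> x @ \oo --> xbar ->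
    ((phi Y f c xbar)%:E <=
       limn_einf (fun k => (phi_rs Y f c (rho k) (sigma k) (x k))%:E))%E.
Proof.
move=> _ _ cX _ _ cY f_C11 _ _ _ Theta_ne0 phi_lsc rho sigma rho_gt0 sigma_gt0
  _ sigma_cvg x xbar Xx x_cvg.
have Xxbar : X xbar.
  apply: (closed_cvg _ (compact_closed (@norm_hausdorff _ _) cX) _ _ x_cvg).
  exact: nearW.
have [M fM] := compact_continuous_ubound (compact_setX cX cY) (C11_on_continuous f_C11).
have [C [C_ge0 YC]] := compact_sqnorm_bounded cY.
apply: le_limn_einf => e e_gt0.
have e2_gt0 : 0 < e / 2 by rewrite divr_gt0.
have penalty_small : \forall k \near \oo, sigma k / 2 * C <= e / 2.
  have sC_cvg : (fun k => sigma k / 2 * C) @ \oo --> 0.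
    by rewrite -(mul0r C) -(mul0r 2^-1); do 2 apply: cvgMr_tmp.
  apply: filterS (cvgr0_norm_le _ sC_cvg _ e2_gt0) => k.
  exact: le_trans (ler_norm _).
have phi_near := lsc_on_cvg phi_lsc Xx x_cvg Xxbar e2_gt0.
near=> k.
have phi_xk : phi Y f c xbar - e / 2 < phi Y f c (x k) by near: k.
have small_k : sigma k / 2 * C <= e / 2 by near: k.
have := phi_le_phi_rs (ltW (rho_gt0 k)) (ltW (sigma_gt0 k))
  (fun y Yy => fM (x k, y) (conj (Xx k) Yy)) YC (Theta_ne0 _ (Xx k)).
lra.
Unshelve. all: by end_near.
Qed.
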